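(* Let $(X,Y)\sim P_{X,Y}$ be random variables in $\mathcal{X}\times\mathcal{Y}$, where $|\mathcal{X}|=2$ and $\mathcal{Y}$ is finite. For any positive integer $L$, the greedy-merge algorithm finds a quantizer $f:\mathcal{Y}\to\{1,\dots,L\}$ such that \[ I(X;Y)-I(X;f(Y))\leq\frac{64}{L^2}. \]
   Context: Logarithms are natural. The greedy-merge algorithm: repeatedly merge into a single new symbol the two output symbols $i\neq j$ whose merging (applying the map sending $i,j$ to a new common symbol and fixing all others) decreases the mutual information with $X$ the least, until at most $L$ symbols remain; the quantizer $f$ is the composition of all merges. *)

From HB Require Import structures.
From mathcomp Require Import all_boot all_order all_algebra.
From mathcomp Require Import reals exp.
Set Implicit Arguments. Unset Strict Implicit. Unset Printing Implicit Defensive.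
Import Order.TTheory GRing.Theory Num.Theory.
Local Open Scope ring_scope.

Section InfoDefs.
Variables (R : realType) (X Y : finType).

Definition is_joint_dist (P : X -> Y -> R) : Prop :=
  (forall x y, 0 <= P x y) /\ \sum_(x : X) \sum_(y : Y) P x y = 1.

Definition labels (T : eqType) (g : Y -> T) : seq T :=
  undup [seq g y | y <- enum Y].

Definition pX (P : X -> Y -> R) (x : X) : R := \sum_(y : Y) P x y.

Definition pXg (T : eqType) (P : X -> Y -> R) (g : Y -> T) (x : X) (z : T) : R :=
  \sum_(y : Y | g y == z) P x y.

Definition pg (T : eqType) (P : X -> Y -> R) (g : Y -> T) (z : T) : R :=
  \sum_(x : X) pXg P g x z.

(* Mutual information I(X; g(Y)) in nats, with the convention 0 log 0 = 0. *)
Definition MI (T : eqType) (P : X -> Y -> R) (g : Y -> T) : R :=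
  \sum_(z <- labels g) \sum_(x : X)
     (if 0 < pXg P g x z
      then pXg P g x z * ln (pXg P g x z / (pX P x * pg P g z))
      else 0).

Definition merge (g : Y -> nat) (i j k : nat) : Y -> nat :=
  fun y => if (g y == i) || (g y == j) then k else g y.

Definition greedy_step (P : X -> Y -> R) (g g' : Y -> nat) : Prop :=
  exists i j k,
    [/\ i \in labels g, j \in labels g, i != j & k \notin labels g] /\
        (forall i' j' k', i' \in labels g -> j' \in labels g -> i' != j' ->
            k' \notin labels g ->
            MI P g - MI P (merge g i j k) <= MI P g - MI P (merge g i' j' k')) /\
        (forall y, g' y = merge g i j k y).

Fixpoint greedy_run (P : X -> Y -> R) (L : nat) (g : Y -> nat)
    (s : seq (Y -> nat)) : Prop :=
  match s with
  | [::] => (size (labels g) <= L)%N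
  | g' :: s' => (L < size (labels g))%N /\ greedy_step P g g' /\ greedy_run P L g' s'
  end.

End InfoDefs.

(* Write a_z, b_z for the masses of (x0, z) and (x1, z), n_z := a_z + b_z, and
   t_z := sqrt (b_z / n_z) - sqrt (a_z / n_z), which lies in [-1, 1].  Bounding
   ln u <= u - 1 row by row, merging z and z' loses at most
   (a_z b_z' - a_z' b_z)^2 (n_z + n_z') / (n_z n_z' (a_z + a_z') (b_z + b_z')),
   and writing (a_z, b_z) = n_z (cos^2, sin^2) this is at most
   2 (n_z + n_z') (t_z - t_z')^2.  With K + 1 symbols left, sort them by t: the
   K consecutive pairs have sum of K/2 (n_z + n_z') + K (t_z' - t_z) at most 3K,
   so one pair has this quantity at most 3, and by AM-GM merging it costs at
   most 16 / K^3; the greedy merge costs no more.  Since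
   16 / K^3 <= 32 / K^2 - 32 / (K + 1)^2, the losses telescope to 32 / L^2. *)

From Pilot Require Import Defs.
From HB Require Import structures.
From mathcomp Require Import all_boot all_order all_algebra.
From mathcomp Require Import reals exp.
From mathcomp Require Import ring lra zify.
Set Implicit Arguments.
Unset Strict Implicit.
Unset Printing Implicit Defensive.

Import Order.TTheory GRing.Theory Num.Theory.
Local Open Scope ring_scope.

Section MergeInequality.
Variable R : realType.

Lemma quarter_circle_cross_sqr_le (c1 s1 c2 s2 : R) :
  0 <= c1 -> 0 <= s1 -> 0 <= c2 -> 0 <= s2 ->
  c1 ^+ 2 + s1 ^+ 2 = 1 -> c2 ^+ 2 + s2 ^+ 2 = 1 ->
  (c1 * s2 - s1 * c2) ^+ 2 <= ((s1 - c1) - (s2 - c2)) ^+ 2.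
Proof.
move=> hc1 hs1 hc2 hs2 e1 e2.
have [c1_le1 s1_le1 c2_le1 s2_le1] : [/\ c1 <= 1, s1 <= 1, c2 <= 1 & s2 <= 1].
  by split; nra.
have [hs|hs] := leP s1 s2.
- have hc : c2 <= c1 by nra.
  have cross_ge0 : 0 <= c1 * s2 - s1 * c2 by nra.
  have : c1 * s2 - s1 * c2 <= (s2 - s1) + (c1 - c2) by nra.
  nra.
- have hc : c1 <= c2 by nra.
  have cross_le0 : c1 * s2 - s1 * c2 <= 0 by nra.
  have : (s2 - s1) + (c1 - c2) <= c1 * s2 - s1 * c2 by nra.
  nra.
Qed.

Lemma quarter_circle_det_sqr_le (n1 n2 c1 s1 c2 s2 : R) : 0 < n1 -> 0 < n2 ->
  0 <= c1 -> 0 <= s1 -> 0 <= c2 -> 0 <= s2 ->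
  c1 ^+ 2 + s1 ^+ 2 = 1 -> c2 ^+ 2 + s2 ^+ 2 = 1 ->
  (n1 * n2 * (c1 ^+ 2 * s2 ^+ 2 - c2 ^+ 2 * s1 ^+ 2)) ^+ 2 <=
  2 * (n1 * n2) * ((n1 * c1 ^+ 2 + n2 * c2 ^+ 2) * (n1 * s1 ^+ 2 + n2 * s2 ^+ 2))
    * ((s1 - c1) - (s2 - c2)) ^+ 2.
Proof.
move=> hn1 hn2 hc1 hs1 hc2 hs2 e1 e2.
set T := (s1 - c1) - (s2 - c2); set Z := c1 ^+ 2 * s2 ^+ 2 + s1 ^+ 2 * c2 ^+ 2.
have hn : 0 < n1 * n2 by apply: mulr_gt0.
have hX := quarter_circle_cross_sqr_le hc1 hs1 hc2 hs2 e1 e2.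
have hY : (c1 * s2 + s1 * c2) ^+ 2 <= 2 * Z.
  by rewrite /Z; have := sqr_ge0 (c1 * s2 - s1 * c2); lra.
have hZ : n1 * n2 * Z <= (n1 * c1 ^+ 2 + n2 * c2 ^+ 2) * (n1 * s1 ^+ 2 + n2 * s2 ^+ 2).
  by rewrite /Z; nra.
have -> : (n1 * n2 * (c1 ^+ 2 * s2 ^+ 2 - c2 ^+ 2 * s1 ^+ 2)) ^+ 2 =
    (n1 * n2) ^+ 2 * (c1 * s2 - s1 * c2) ^+ 2 * (c1 * s2 + s1 * c2) ^+ 2 by ring.
apply: (@le_trans _ _ ((n1 * n2) ^+ 2 * T ^+ 2 * (2 * Z))).
  apply: ler_pM; [exact: mulr_ge0 (sqr_ge0 _) (sqr_ge0 _) | exact: sqr_ge0 | | exact: hY].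
  by rewrite ler_pM2l ?exprn_gt0.
have -> : (n1 * n2) ^+ 2 * T ^+ 2 * (2 * Z) = 2 * (n1 * n2) * (n1 * n2 * Z) * T ^+ 2.
  by ring.
by rewrite ler_wpM2r ?sqr_ge0 // ler_wpM2l //; lra.
Qed.

Definition tilt (a b : R) := Num.sqrt (b / (a + b)) - Num.sqrt (a / (a + b)).

Lemma tilt_bound (a b : R) : 0 <= a -> 0 <= b -> -1 <= tilt a b <= 1.
Proof.
move=> ha hb.
have sqrt_le1 u : 0 <= u -> u <= a + b -> Num.sqrt (u / (a + b)) <= 1.
  move=> hu hub; rewrite -sqrtr1 ler_sqrt //.
  have [ab0|abp] := leP (a + b) 0; last by rewrite ler_pdivrMr ?mul1r.
  have -> : a + b = 0 by lra.
  by rewrite invr0 mulr0.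
have := sqrt_le1 a ha ltac:(lra); have := sqrt_le1 b hb ltac:(lra).
have := sqrtr_ge0 (a / (a + b)); have := sqrtr_ge0 (b / (a + b)).
by rewrite /tilt => *; apply/andP; split; lra.
Qed.

Lemma det_sqr_le_tilt (a1 b1 a2 b2 : R) :
  0 <= a1 -> 0 <= b1 -> 0 <= a2 -> 0 <= b2 ->
  (a1 * b2 - a2 * b1) ^+ 2 <=
  2 * ((a1 + b1) * (a2 + b2)) * ((a1 + a2) * (b1 + b2)) * (tilt a1 b1 - tilt a2 b2) ^+ 2.
Proof.
move=> ha1 hb1 ha2 hb2.
have rhs_ge0 : 0 <= 2 * ((a1 + b1) * (a2 + b2)) * ((a1 + a2) * (b1 + b2))
    * (tilt a1 b1 - tilt a2 b2) ^+ 2.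
  by apply: mulr_ge0; [rewrite !mulr_ge0 //; lra | exact: sqr_ge0].
have [n1_le0|hn1] := leP (a1 + b1) 0.
  suff -> : a1 * b2 - a2 * b1 = 0 by rewrite expr2 mul0r.
  have [-> ->] : a1 = 0 /\ b1 = 0 by lra.
  by rewrite mul0r mulr0 subrr.
have [n2_le0|hn2] := leP (a2 + b2) 0.
  suff -> : a1 * b2 - a2 * b1 = 0 by rewrite expr2 mul0r.
  have [-> ->] : a2 = 0 /\ b2 = 0 by lra.
  by rewrite mul0r mulr0 subrr.
rewrite /tilt.
move: hn1 hn2; move En1 : (a1 + b1) => n1; move En2 : (a2 + b2) => n2 => hn1 hn2.
set c1 := Num.sqrt (a1 / n1); set s1 := Num.sqrt (b1 / n1).
set c2 := Num.sqrt (a2 / n2); set s2 := Num.sqrt (b2 / n2).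
have sqr_sqrt_div (u n : R) : 0 <= u -> 0 < n -> n * Num.sqrt (u / n) ^+ 2 = u.
  move=> hu hn; rewrite sqr_sqrtr ?divr_ge0 ?(ltW hn) //.
  by rewrite mulrC divfK // gt_eqF.
have unit_circle (u v n : R) : 0 < n -> 0 <= u -> 0 <= v -> u + v = n ->
    Num.sqrt (u / n) ^+ 2 + Num.sqrt (v / n) ^+ 2 = 1.
  move=> hn hu hv huv; rewrite !sqr_sqrtr ?divr_ge0 ?(ltW hn) //.
  by rewrite -mulrDl huv divff // lt0r_neq0.
have [ea1 eb1] : a1 = n1 * c1 ^+ 2 /\ b1 = n1 * s1 ^+ 2 by rewrite !sqr_sqrt_div.
have [ea2 eb2] : a2 = n2 * c2 ^+ 2 /\ b2 = n2 * s2 ^+ 2 by rewrite !sqr_sqrt_div.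
have -> : a1 * b2 - a2 * b1 = n1 * n2 * (c1 ^+ 2 * s2 ^+ 2 - c2 ^+ 2 * s1 ^+ 2).
  by rewrite ea1 eb1 ea2 eb2; ring.
rewrite {1}ea1 {1}ea2 {1}eb1 {1}eb2.
exact: quarter_circle_det_sqr_le hn1 hn2 (sqrtr_ge0 _) (sqrtr_ge0 _)
  (sqrtr_ge0 _) (sqrtr_ge0 _) (unit_circle _ _ _ hn1 ha1 hb1 En1)
  (unit_circle _ _ _ hn2 ha2 hb2 En2).
Qed.

Definition mi_summand (u p q : R) := if 0 < u then u * ln (u / (p * q)) else 0.

Lemma mi_summand0 (p q : R) : mi_summand 0 p q = 0.
Proof. by rewrite /mi_summand ltxx. Qed.

Lemma ln_le_subr1 (x : R) : 0 < x -> ln x <= x - 1.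
Proof. by move=> x_gt0; have := @le_ln1Dx R (x - 1); rewrite subrKC; apply; lra. Qed.

Lemma mi_summand_sub_le (u n a N p : R) : 0 <= u -> u <= n -> u <= a -> a <= p ->
  n <= N -> mi_summand u p n - u * ln (a / (p * N)) <= u ^+ 2 * N / (n * a) - u.
Proof.
move=> hu hun hua hap hnN; rewrite /mi_summand.
have [u_gt0|u_le0] := ltP 0 u; last first.
  have -> : u = 0 by lra.
  by rewrite mul0r expr2 !mul0r subrr.
have [hn ha hp hN] : [/\ 0 < n, 0 < a, 0 < p & 0 < N] by split; lra.
rewrite -mulrBr -ln_div ?posrE ?divr_gt0 ?mulr_gt0 //.
have -> : u / (p * n) / (a / (p * N)) = u * N / (n * a).
  by field; rewrite !gt_eqF.
have := ln_le_subr1 (divr_gt0 (mulr_gt0 u_gt0 hN) (mulr_gt0 hn ha)).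
move=> /(ler_wpM2l (ltW u_gt0)); congr (_ <= _).
by field; rewrite !gt_eqF.
Qed.

Lemma mi_summand_merge_le (a1 a2 n1 n2 p : R) : 0 <= a1 -> 0 <= a2 ->
  a1 <= n1 -> a2 <= n2 -> 0 < n1 -> 0 < n2 -> a1 + a2 <= p ->
  mi_summand a1 p n1 + mi_summand a2 p n2 - mi_summand (a1 + a2) p (n1 + n2) <=
  (a1 * n2 - a2 * n1) ^+ 2 / (n1 * n2 * (a1 + a2)).
Proof.
move=> h1 h2 h1n h2n hn1 hn2 hp.
have [a_le0|a_gt0] := leP (a1 + a2) 0.
  have [-> ->] : a1 = 0 /\ a2 = 0 by lra.
  by rewrite addr0 !mi_summand0 mulr0 invr0 mulr0 subr0 addr0.
have -> : mi_summand (a1 + a2) p (n1 + n2) =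
    a1 * ln ((a1 + a2) / (p * (n1 + n2))) + a2 * ln ((a1 + a2) / (p * (n1 + n2))).
  by rewrite /mi_summand a_gt0 mulrDl.
have := @mi_summand_sub_le a1 n1 (a1 + a2) (n1 + n2) p h1 h1n ltac:(lra) hp ltac:(lra).
have := @mi_summand_sub_le a2 n2 (a1 + a2) (n1 + n2) p h2 h2n ltac:(lra) hp ltac:(lra).
have -> : (a1 * n2 - a2 * n1) ^+ 2 / (n1 * n2 * (a1 + a2)) =
    (a1 ^+ 2 * (n1 + n2) / (n1 * (a1 + a2)) - a1) +
    (a2 ^+ 2 * (n1 + n2) / (n2 * (a1 + a2)) - a2).
  by field; rewrite !gt_eqF.
lra.
Qed.

Lemma chi2_merge_le (a1 b1 a2 b2 : R) :
  0 <= a1 -> 0 <= b1 -> 0 <= a2 -> 0 <= b2 -> 0 < a1 + b1 -> 0 < a2 + b2 ->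
  (a1 * b2 - a2 * b1) ^+ 2 / ((a1 + b1) * (a2 + b2) * (a1 + a2))
  + (a1 * b2 - a2 * b1) ^+ 2 / ((a1 + b1) * (a2 + b2) * (b1 + b2))
  <= 2 * (a1 + b1 + (a2 + b2)) * (tilt a1 b1 - tilt a2 b2) ^+ 2.
Proof.
move=> ha1 hb1 ha2 hb2 hn1 hn2.
have := det_sqr_le_tilt ha1 hb1 ha2 hb2.
set D := a1 * b2 - a2 * b1; set t := tilt a1 b1 - tilt a2 b2.
set n1 := a1 + b1 in hn1 *; set n2 := a2 + b2 in hn2 *.
have [-> _|D_neq0 det_le] := eqVneq D 0.
  by rewrite expr2 !mul0r add0r; apply: mulr_ge0; [lra | exact: sqr_ge0].
have hA : 0 < a1 + a2.
  rewrite ltNge; apply: contra D_neq0 => A_le0; rewrite /D.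
  have [-> ->] : a1 = 0 /\ a2 = 0 by lra.
  by rewrite !mul0r subrr.
have hB : 0 < b1 + b2.
  rewrite ltNge; apply: contra D_neq0 => B_le0; rewrite /D.
  have [-> ->] : b1 = 0 /\ b2 = 0 by lra.
  by rewrite !mulr0 subrr.
have -> : D ^+ 2 / (n1 * n2 * (a1 + a2)) + D ^+ 2 / (n1 * n2 * (b1 + b2)) =
    D ^+ 2 * (n1 + n2) / (n1 * n2 * ((a1 + a2) * (b1 + b2))).
  by rewrite /n1 /n2; field; rewrite !gt_eqF.
rewrite ler_pdivrMr ?mulr_gt0 //.
apply: le_trans (ler_wpM2r (_ : 0 <= n1 + n2) det_le) _; first lra.
by rewrite le_eqVlt; apply/orP; left; apply/eqP; ring.
Qed.

Lemma merge_loss_le (a1 b1 a2 b2 p0 p1 : R) :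
  0 <= a1 -> 0 <= b1 -> 0 <= a2 -> 0 <= b2 -> a1 + a2 <= p0 -> b1 + b2 <= p1 ->
  mi_summand a1 p0 (a1 + b1) + mi_summand b1 p1 (a1 + b1)
  + (mi_summand a2 p0 (a2 + b2) + mi_summand b2 p1 (a2 + b2))
  - (mi_summand (a1 + a2) p0 (a1 + b1 + (a2 + b2))
     + mi_summand (b1 + b2) p1 (a1 + b1 + (a2 + b2)))
  <= 2 * (a1 + b1 + (a2 + b2)) * (tilt a1 b1 - tilt a2 b2) ^+ 2.
Proof.
move=> ha1 hb1 ha2 hb2 hp0 hp1.
set t := tilt a1 b1 - tilt a2 b2.
have rhs_ge0 (c : R) : 0 <= c -> 0 <= 2 * c * t ^+ 2.
  by move=> c_ge0; apply: mulr_ge0; [lra | exact: sqr_ge0].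
have [n1_le0|hn1] := leP (a1 + b1) 0.
  have [-> ->] : a1 = 0 /\ b1 = 0 by lra.
  by rewrite !add0r !mi_summand0 !add0r subrr rhs_ge0 //; lra.
have [n2_le0|hn2] := leP (a2 + b2) 0.
  have [-> ->] : a2 = 0 /\ b2 = 0 by lra.
  by rewrite !addr0 !mi_summand0 !addr0 subrr rhs_ge0 //; lra.
have [a1_le b1_le] : a1 <= a1 + b1 /\ b1 <= a1 + b1 by lra.
have [a2_le b2_le] : a2 <= a2 + b2 /\ b2 <= a2 + b2 by lra.
have := mi_summand_merge_le ha1 ha2 a1_le a2_le hn1 hn2 hp0.
have := mi_summand_merge_le hb1 hb2 b1_le b2_le hn1 hn2 hp1.
have -> : b1 * (a2 + b2) - b2 * (a1 + b1) = - (a1 * b2 - a2 * b1) by ring.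
have -> : a1 * (a2 + b2) - a2 * (a1 + b1) = a1 * b2 - a2 * b1 by ring.
have := chi2_merge_le ha1 hb1 ha2 hb2 hn1 hn2.
by rewrite sqrrN -/t; lra.
Qed.
End MergeInequality.

Section ClosePair.
Variable R : realType.

Lemma mul_sqr_le_inv_cube (K w d : R) : 0 < K -> 0 <= w -> 0 <= d ->
  K / 2 * w + K * d <= 3 -> w * d ^+ 2 <= 8 / K ^+ 3.
Proof.
move=> hK hw hd h.
set x := K / 2 * w; set y := K / 2 * d.
have [hx hy] : 0 <= x /\ 0 <= y by split; apply: mulr_ge0 => //; lra.
have hxy : x + 2 * y <= 3 by rewrite /x /y; lra.
(* AM-GM for x, y, y *)
have amgm : x * y ^+ 2 <= 1.
  have : 0 <= (y - 1) ^+ 2 * (2 * y + 1) by apply: mulr_ge0; [exact: sqr_ge0 | lra].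
  have : x * y ^+ 2 <= (3 - 2 * y) * y ^+ 2 by apply: ler_wpM2r; [exact: sqr_ge0 | lra].
  nra.
have -> : w * d ^+ 2 = x * y ^+ 2 * (8 / K ^+ 3) by rewrite /x /y; field; rewrite gt_eqF.
by rewrite -[leRHS]mul1r ler_wpM2r // divr_ge0 ?exprn_ge0 // ltW.
Qed.

Lemma exists_le_average (F : nat -> R) (K : nat) (c : R) : (0 < K)%N ->
  \sum_(0 <= k < K) F k <= K%:R * c -> exists2 k, (k < K)%N & F k <= c.
Proof.
move=> K_gt0 hsum.
have /hasP[k] : has (fun k => F k <= c) (index_iota 0 K).
  apply: contraLR hsum; rewrite -all_predC -ltNge => /allP /= hlt.
  rewrite mulr_natl -[X in c *+ X]subn0 -sumr_const_nat.
  rewrite big_seq [X in _ < X]big_seq.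
  apply: ltr_sum => [|k /hlt]; last by rewrite ltNge.
  by apply/hasP; exists 0%N; rewrite mem_index_iota.
by rewrite mem_index_iota => /andP[_ hk] hFk; exists k.
Qed.

Lemma exists_close_pair (T : eqType) (t n : T -> R) (l : seq T) (K : nat) :
  (0 < K)%N -> uniq l -> size l = K.+1 ->
  (forall z, 0 <= n z) -> (forall z, -1 <= t z <= 1) -> \sum_(z <- l) n z <= 1 ->
  exists p q, [/\ p \in l, q \in l, p != q &
    (n p + n q) * (t p - t q) ^+ 2 <= 8 / K%:R ^+ 3].
Proof.
move=> K_gt0 l_uniq l_size n_ge0 t_bound l_sum.
have [x0 _] : exists x0 : T, x0 \in l.
  by case: l l_size {l_uniq l_sum} => // x0 l' _; exists x0; exact: mem_head.
set s := sort (fun p q => t p <= t q) l.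
have s_perm : perm_eq s l by rewrite perm_sort.
have s_uniq : uniq s by rewrite (perm_uniq s_perm).
have s_size : size s = K.+1 by rewrite size_sort.
have /(sortedP x0) s_sorted : sorted (fun p q => t p <= t q) s.
  by apply: sort_sorted => p q; exact: le_total.
pose z k := nth x0 s k.
have s_sum : \sum_(0 <= k < K.+1) n (z k) <= 1.
  by move: l_sum; rewrite -(perm_big _ s_perm) (big_nth x0) s_size.
pose F k := K%:R / 2 * (n (z k) + n (z k.+1)) + K%:R * (t (z k.+1) - t (z k)).
have F_sum : \sum_(0 <= k < K) F k <= K%:R * 3.
  have sum_head : \sum_(0 <= k < K) n (z k) <= 1.
    by move: s_sum; rewrite big_nat_recr //=; have := n_ge0 (z K); lra.
  have sum_tail : \sum_(0 <= k < K) n (z k.+1) <= 1.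
    by move: s_sum; rewrite big_nat_recl //=; have := n_ge0 (z 0%N); lra.
  have := t_bound (z 0%N); have := t_bound (z K).
  rewrite big_split /= -!mulr_sumr big_split /= telescope_sumr //.
  have : 0 <= K%:R :> R by rewrite ler0n.
  nra.
have [k k_lt hFk] := exists_le_average K_gt0 F_sum.
have k_size : (k.+1 < size s)%N by rewrite s_size ltnS.
exists (z k), (z k.+1); split.
- by rewrite -(perm_mem s_perm) mem_nth // ltnW.
- by rewrite -(perm_mem s_perm) mem_nth.
- by rewrite nth_uniq ?(ltnW k_size) // eqn_leq ltnn andbF.
rewrite -sqrrN opprB; apply: mul_sqr_le_inv_cube => //.
- by rewrite ltr0n.
- by apply: addr_ge0.
- by rewrite subr_ge0; apply: s_sorted.
Qed.
End ClosePair.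

Lemma big_undup_map_relabel (R : Type) (idx : R) (op : Monoid.com_law idx)
    (I T1 T2 : eqType) (g1 : I -> T1) (g2 : I -> T2) (F1 : T1 -> R) (F2 : T2 -> R)
    (s : seq I) :
  (forall y y', (g1 y == g1 y') = (g2 y == g2 y')) -> (forall y, F1 (g1 y) = F2 (g2 y)) ->
  \big[op/idx]_(z <- undup (map g1 s)) F1 z = \big[op/idx]_(z <- undup (map g2 s)) F2 z.
Proof.
move=> same_fibres F12; elim: s => [|y s IH] /=; first by rewrite !big_nil.
have -> : (g1 y \in map g1 s) = (g2 y \in map g2 s).
  apply/mapP/mapP => -[y' y's e]; exists y' => //; apply/eqP.
    by rewrite -same_fibres e.
  by rewrite same_fibres e.
by case: ifP => _ //; rewrite !big_cons IH F12.
Qed.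

Lemma sum_card2 (V : nmodType) (X : finType) : #|X| = 2%N ->
  exists x0 x1 : X, forall F : X -> V, \sum_(x : X) F x = F x0 + F x1.
Proof.
rewrite cardE; case E : (enum X) => [|x0 [|x1 [|]]] // _.
by exists x0, x1 => F; rewrite [index_enum X]unlock -enumT E big_cons big_seq1.
Qed.

Section Potential.
Variable R : realType.

Lemma div_sqr_le (c a b : R) : 0 <= c -> 0 < a -> a <= b -> c / b ^+ 2 <= c / a ^+ 2.
Proof.
move=> hc ha hab; apply: ler_wpM2l => //.
rewrite lef_pV2 ?posrE ?exprn_gt0 //; last lra.
by rewrite lerXn2r ?nnegrE // ltW //; lra.
Qed.

Lemma inv_cube_le_sub_inv_sqr (K : R) : 1 <= K ->
  16 / K ^+ 3 <= 32 / K ^+ 2 - 32 / (K + 1) ^+ 2.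
Proof.
move=> hK; rewrite -subr_ge0.
have -> : 32 / K ^+ 2 - 32 / (K + 1) ^+ 2 - 16 / K ^+ 3 =
    16 * (3 * K ^+ 2 - 1) / (K ^+ 3 * (K + 1) ^+ 2).
  by field; rewrite !gt_eqF //; lra.
apply: divr_ge0; first by apply: mulr_ge0; nra.
by apply: mulr_ge0; [apply: exprn_ge0 | apply: sqr_ge0]; lra.
Qed.
End Potential.

Section MutualInformation.
Variables (R : realType) (X Y : finType) (P : X -> Y -> R).
Hypothesis hP : is_joint_dist P.

Definition MI_at (T : eqType) (g : Y -> T) (z : T) : R :=
  \sum_(x : X) mi_summand (pXg P g x z) (pX P x) (pg P g z).

Lemma MIE (T : eqType) (g : Y -> T) : MI P g = \sum_(z <- labels g) MI_at g z.
Proof. by []. Qed.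

Lemma labelsP (T : eqType) (g : Y -> T) z : reflect (exists y, z = g y) (z \in labels g).
Proof.
rewrite /labels mem_undup; apply: (iffP mapP) => -[y]; first by move=> _ ->; exists y.
by move=> ->; exists y; rewrite ?mem_enum.
Qed.

Lemma labels_index_ord (T : eqType) (g : Y -> T) (L : nat) : (size (labels g) <= L)%N ->
  exists f : Y -> 'I_L, forall y y', (f y == f y') = (g y == g y').
Proof.
move=> g_size; have g_in y : g y \in labels g by apply/labelsP; exists y.
have index_lt y : (index (g y) (labels g) < L)%N.
  by apply: leq_trans g_size; rewrite index_mem.
exists (fun y => Ordinal (index_lt y)) => y y'; rewrite -val_eqE /=.
by apply/eqP/eqP => [e|->//]; rewrite -(nth_index (g y) (g_in y)) e nth_index.
Qed.

Lemma pXg_notin (T : eqType) (g : Y -> T) x z : z \notin labels g -> pXg P g x z = 0.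
Proof.
move=> z_notin; rewrite /pXg big1 // => y /eqP gy.
by case/negP: z_notin; apply/labelsP; exists y.
Qed.

Lemma MI_at_notin (T : eqType) (g : Y -> T) z : z \notin labels g -> MI_at g z = 0.
Proof.
by move=> z_notin; rewrite /MI_at big1 // => x _; rewrite pXg_notin // mi_summand0.
Qed.

Lemma MI_sum_over (T : eqType) (g : Y -> T) (U : seq T) :
  uniq U -> {subset labels g <= U} -> MI P g = \sum_(z <- U) MI_at g z.
Proof.
move=> U_uniq sub_U.
rewrite (bigID (mem (labels g))) /= [X in _ + X]big1 ?addr0; last first.
  by move=> z /MI_at_notin.
rewrite -big_filter MIE; apply/perm_big/uniq_perm; rewrite ?filter_uniq ?undup_uniq //.
by move=> z; rewrite mem_filter; case: (boolP (z \in labels g)) => // /sub_U ->.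
Qed.

Lemma MI_relabel (T1 T2 : eqType) (g1 : Y -> T1) (g2 : Y -> T2) :
  (forall y y', (g1 y == g1 y') = (g2 y == g2 y')) -> MI P g1 = MI P g2.
Proof.
move=> same_fibres; rewrite !MIE; apply: big_undup_map_relabel => // y.
have pXg12 x : pXg P g1 x (g1 y) = pXg P g2 x (g2 y).
  by apply: eq_bigl => y'; rewrite same_fibres.
rewrite /MI_at /pg; apply: eq_bigr => x _; rewrite pXg12.
by congr mi_summand; apply: eq_bigr => x' _; rewrite pXg12.
Qed.

Lemma pXg_ge0 (T : eqType) (g : Y -> T) x z : 0 <= pXg P g x z.
Proof. by case: hP => P_ge0 _; apply: sumr_ge0. Qed.

Lemma pg_ge0 (T : eqType) (g : Y -> T) z : 0 <= pg P g z.
Proof. by apply: sumr_ge0 => x _; apply: pXg_ge0. Qed.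

Lemma sum_pXg (T : eqType) (g : Y -> T) x : \sum_(z <- labels g) pXg P g x z = pX P x.
Proof.
rewrite /pXg /pX; under eq_bigr do rewrite big_mkcond.
rewrite exchange_big /=; apply: eq_bigr => y _.
have gy_in : g y \in labels g by apply/labelsP; exists y.
rewrite (bigD1_seq (g y)) ?undup_uniq //= eqxx big1 ?addr0 // => z.
by rewrite eq_sym => /negbTE ->.
Qed.

Lemma sum_pg (T : eqType) (g : Y -> T) : \sum_(z <- labels g) pg P g z = 1.
Proof.
case: hP => _ <-; rewrite /pg exchange_big /=.
by apply: eq_bigr => x _; rewrite sum_pXg.
Qed.

Section Merge.
Variables (g : Y -> nat) (i j k : nat).
Hypotheses (i_in : i \in labels g) (j_in : j \in labels g) (neq_ij : i != j)
  (k_notin : k \notin labels g).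
Local Notation h := (Defs.merge g i j k).

Lemma label_neq_fresh y : g y != k.
Proof. by apply: contraNneq k_notin => <-; apply/labelsP; exists y. Qed.

Lemma labels_merge_sub : {subset labels h <= k :: labels g}.
Proof.
move=> z /labelsP[y ->]; rewrite /Defs.merge inE.
by case: ifP => _; rewrite ?eqxx //; apply/orP; right; apply/labelsP; exists y.
Qed.

Lemma merged_notin_labels z : (z == i) || (z == j) -> z \notin labels h.
Proof.
move=> z_ij; apply/labelsP => -[y zE]; move: z_ij; rewrite zE /Defs.merge.
case: ifP => [_ /orP[] /eqP k_ij|->] //.
- by move: k_notin; rewrite k_ij i_in.
- by move: k_notin; rewrite k_ij j_in.
Qed.

Lemma pXg_merge_other x z : z != i -> z != j -> z != k -> pXg P h x z = pXg P g x z.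
Proof.
move=> zi zj zk; apply: eq_bigl => y; rewrite /Defs.merge.
case: ifP => // /orP[] /eqP ->.
  by rewrite eq_sym (negbTE zk) eq_sym (negbTE zi).
by rewrite eq_sym (negbTE zk) eq_sym (negbTE zj).
Qed.

Lemma MI_at_merge_other z : z != i -> z != j -> z != k -> MI_at h z = MI_at g z.
Proof.
move=> zi zj zk; rewrite /MI_at /pg.
under eq_bigr do rewrite pXg_merge_other //.
by under eq_bigr do under eq_bigr do rewrite pXg_merge_other //.
Qed.

Lemma pXg_merge_new x : pXg P h x k = pXg P g x i + pXg P g x j.
Proof.
rewrite /pXg !(big_mkcond (fun y => _ == _)) -big_split /=; apply: eq_bigr => y _.
rewrite /Defs.merge; have [->|gi] := eqVneq (g y) i.
  by rewrite eqxx (negbTE neq_ij) addr0.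
have [->|gj] := eqVneq (g y) j; first by rewrite eqxx add0r.
by rewrite /= (negbTE (label_neq_fresh y)) addr0.
Qed.

Lemma pg_merge_new : pg P h k = pg P g i + pg P g j.
Proof. by rewrite /pg -big_split; apply: eq_bigr => x _; rewrite pXg_merge_new. Qed.

Lemma pXg_merged_le x : pXg P g x i + pXg P g x j <= pX P x.
Proof.
case: hP => P_ge0 _; rewrite /pXg /pX !(big_mkcond (fun y => _ == _)) -big_split /=.
apply: ler_sum => y _; have [->|gi] := eqVneq (g y) i.
  by rewrite (negbTE neq_ij) addr0.
by case: eqP; rewrite ?add0r ?addr0.
Qed.

Lemma MI_merge_loss : MI P g - MI P h = MI_at g i + MI_at g j - MI_at h k.
Proof.
have U_uniq : uniq (k :: labels g) by rewrite /= k_notin undup_uniq.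
have sub_g : {subset labels g <= k :: labels g} by move=> z zg; rewrite inE zg orbT.
rewrite (MI_sum_over U_uniq sub_g) (MI_sum_over U_uniq labels_merge_sub).
rewrite -sumrB big_cons MI_at_notin // sub0r.
rewrite (bigD1_seq i) ?undup_uniq //= -big_filter.
rewrite (bigD1_seq j) ?filter_uniq ?undup_uniq //=; last by rewrite mem_filter eq_sym neq_ij.
rewrite big1_seq ?addr0; last first.
  move=> z /andP[zj]; rewrite mem_filter => /andP[zi zg].
  by rewrite MI_at_merge_other ?subrr //; apply: contraNneq k_notin => <-.
have [-> ->] : MI_at h i = 0 /\ MI_at h j = 0.
  by split; apply/MI_at_notin/merged_notin_labels; rewrite eqxx ?orbT.
by rewrite !subr0 [LHS]addrC.
Qed.

Lemma size_labels_merge : (size (labels h) < size (labels g))%N.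
Proof.
set p := fun z : nat => (z != i) && (z != j).
have h_size : (size (labels h) <= size (k :: filter p (labels g)))%N.
  apply: uniq_leq_size; first exact: undup_uniq.
  move=> z z_in; have := labels_merge_sub z_in; rewrite !inE.
  case/orP => [->//|zg]; apply/orP; right; rewrite mem_filter zg andbT.
  by apply/andP; split; apply: contraTneq z_in => ->;
    apply: merged_notin_labels; rewrite eqxx ?orbT.
have ij_size : (2 <= size (filter (predC p) (labels g)))%N.
  apply: (@uniq_leq_size _ [:: i; j]); first by rewrite /= inE neq_ij.
  move=> z; rewrite !inE mem_filter /p /= => /orP[] /eqP ->.
  - by rewrite eqxx i_in.
  - by rewrite eqxx andbF j_in.
move: h_size ij_size (count_predC p (labels g)); rewrite /= !size_filter; lia.
Qed.
End Merge.

Lemma labels_eq (T : eqType) (g1 g2 : Y -> T) : g1 =1 g2 -> labels g1 = labels g2.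
Proof. by move=> g12; rewrite /labels (eq_map g12). Qed.

Lemma greedy_step_labels_lt (g g' : Y -> nat) :
  greedy_step P g g' -> (size (labels g') < size (labels g))%N.
Proof.
case=> [i [j [k [[i_in j_in neq_ij k_notin] [_ g'E]]]]].
by rewrite (labels_eq g'E) size_labels_merge.
Qed.

Lemma greedy_run_labels (L : nat) (s : seq (Y -> nat)) (g : Y -> nat) :
  greedy_run P L g s -> (size (labels (last g s)) <= L)%N.
Proof. by elim: s g => [|g' s IH] g //= [_ [_ /IH]]. Qed.

Section BinaryInput.
Variables x0 x1 : X.
Hypothesis sumX : forall F : X -> R, \sum_(x : X) F x = F x0 + F x1.
Local Notation tilt_at g z := (tilt (pXg P g x0 z) (pXg P g x1 z)).

Lemma merge_loss_le_tilt (g : Y -> nat) (i j k : nat) :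
  i \in labels g -> j \in labels g -> i != j -> k \notin labels g ->
  MI P g - MI P (Defs.merge g i j k) <=
  2 * (pg P g i + pg P g j) * (tilt_at g i - tilt_at g j) ^+ 2.
Proof.
move=> i_in j_in neq_ij k_notin.
rewrite MI_merge_loss // /MI_at !sumX pg_merge_new // /pg !sumX !pXg_merge_new //.
exact: merge_loss_le (pXg_ge0 _ _ _) (pXg_ge0 _ _ _) (pXg_ge0 _ _ _) (pXg_ge0 _ _ _)
  (pXg_merged_le g neq_ij x0) (pXg_merged_le g neq_ij x1).
Qed.

Lemma greedy_step_loss (g g' : Y -> nat) (K : nat) : (0 < K)%N ->
  size (labels g) = K.+1 -> greedy_step P g g' -> MI P g - MI P g' <= 16 / K%:R ^+ 3.
Proof.
move=> K_gt0 g_size [i [j [k [[i_in j_in neq_ij k_notin] [greedy g'E]]]]].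
rewrite (@MI_relabel _ _ g' (Defs.merge g i j k)); last by move=> y y'; rewrite !g'E.
have mass_le1 : \sum_(z <- labels g) pg P g z <= 1 by rewrite sum_pg.
have [p [q [p_in q_in neq_pq close]]] :=
  exists_close_pair (t := fun z => tilt_at g z) K_gt0 (undup_uniq _) g_size (pg_ge0 g)
    (fun z => tilt_bound (pXg_ge0 _ _ _) (pXg_ge0 _ _ _)) mass_le1.
apply: le_trans (greedy p q k p_in q_in neq_pq k_notin) _.
apply: le_trans (merge_loss_le_tilt p_in q_in neq_pq k_notin) _.
by rewrite -mulrA; apply: le_trans (ler_wpM2l _ close) _; lra.
Qed.

Lemma greedy_run_loss (L : nat) (s : seq (Y -> nat)) (g : Y -> nat) : (0 < L)%N ->
  greedy_run P L g s ->
  MI P g - MI P (last g s) <= 32 / L%:R ^+ 2 - 32 / (maxn (size (labels g)) L)%:R ^+ 2.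
Proof.
move=> L_gt0; elim: s g => [|g' s IH] g /=.
  by move=> g_size; rewrite (maxn_idPr g_size) subrr subrr.
case=> L_lt [step run]; have := IH _ run; have := greedy_step_labels_lt step.
case g_size: (size (labels g)) L_lt => [//|K] L_lt g'_lt.
have K_gt0 : (0 < K)%N by apply: leq_trans L_gt0 _.
have max'_gt0 : 0 < (maxn (size (labels g')) L)%:R :> R.
  by rewrite ltr0n (leq_trans L_gt0) ?leq_maxr.
have max'_le : (maxn (size (labels g')) L)%:R <= K%:R :> R.
  by rewrite ler_nat geq_max -ltnS g'_lt.
have K_ge1 : 1 <= K%:R :> R by rewrite ler1n.
have := div_sqr_le (ler0n R 32) max'_gt0 max'_le.
have := inv_cube_le_sub_inv_sqr K_ge1.
have := greedy_step_loss K_gt0 g_size step.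
by rewrite (maxn_idPl (ltnW L_lt)) -[K.+1%:R]natr1; lra.
Qed.
End BinaryInput.
End MutualInformation.

Theorem theorem6 (R : realType) (X Y : finType) (P : X -> Y -> R) (L : nat)
  (hX : #|X| = 2%N) (hP : is_joint_dist P) (hL : (0 < L)%N)
  (g0 : Y -> nat) (hg0 : injective g0) (s : seq (Y -> nat))
  (hrun : greedy_run P L g0 s) :
  exists f : Y -> 'I_L,
    (forall y y', (f y == f y') = (last g0 s y == last g0 s y')) /\
    MI P (fun y : Y => y) - MI P f <= 64 / (L%:R ^+ 2).
Proof.
have [x0 [x1 sumX]] := sum_card2 R hX.
have [f f_fibres] := labels_index_ord (greedy_run_labels hrun).
exists f; split => //.
have g0_fibres (y y' : Y) : (y == y') = (g0 y == g0 y') by rewrite inj_eq.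
rewrite (MI_relabel _ g0_fibres) (MI_relabel _ f_fibres).
apply: le_trans (greedy_run_loss hP sumX hL hrun) _.
have := divr_ge0 (ler0n R 32) (sqr_ge0 (maxn (size (labels g0)) L)%:R).
have := divr_ge0 (ler0n R 32) (sqr_ge0 (L%:R : R)).
lra.
Qed.
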